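(* Let $I_n:=\iint_T \frac{(-\ln xy)^n}{xy}\,dx\,dy$. Then $I_n\sim 2\,n!$ as $n\to\infty$. More precisely, for every fixed integer $K\ge1$, \[ \frac{I_n}{n!}=\sum_{j=1}^{K}\binom{2j}{j}\frac{1}{j^{\,n+2}} + O\!\left((K+1)^{-n}\right)\qquad(n\to\infty), \] i.e. $I_n/n!\approx 2+\frac{6}{2^{n+2}}+\frac{20}{3^{n+2}}+\frac{70}{4^{n+2}}+\cdots$.
   Context: $T:=\{(x,y)\in[0,1]^2 : x+y\ge 1\}$. *)

From Stdlib Require Import Reals Lra Arith Factorial.
Open Scope R_scope.

Definition integrand (n : nat) (x y : R) : R :=
  (- ln (x * y)) ^ n / (x * y).

Definition is_RInt (f : R -> R) (a b v : R) : Prop :=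
  exists pr : Riemann_integrable f a b, RiemannInt pr = v.

Definition is_improper_int01 (g : R -> R) (v : R) : Prop :=
  forall eps : R, 0 < eps -> exists delta : R, 0 < delta /\
    forall a b : R, 0 < a < delta -> 1 - delta < b < 1 ->
      exists pr : Riemann_integrable g a b, Rabs (RiemannInt pr - v) < eps.

(* v = iint_T integrand n, T = {(x,y) in [0,1]^2 : x + y >= 1}, computed as the
   iterated integral  int_0^1 ( int_{1-x}^1 integrand n x y dy ) dx  (improper
   in x at both endpoints; the inner integral is proper for 0 < x < 1). *)
Definition is_I (n : nat) (v : R) : Prop :=
  exists g : R -> R,
    (forall x, 0 < x < 1 -> is_RInt (integrand n x) (1 - x) 1 (g x)) /\
    is_improper_int01 g v.

(* sum_{j=1}^K binom(2j,j) / j^(n+2)   (for K >= 1) *)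
Definition partial_sum (K n : nat) : R :=
  sum_f_R0 (fun i => C (2 * (i + 1)) (i + 1) / (INR (i + 1)) ^ (n + 2)) (K - 1).

(* For 0 < x < 1 the inner integral is
     g_n(x) = ((-ln (x (1 - x)))^(n+1) - (-ln x)^(n+1)) / ((n+1) x).
   Folding (0, 1) at 1/2, g_n(x) + g_n(1 - x) is, up to the derivative of an explicit W_n
   with W_n(x) -> 0 as x -> 0, the kernel 2 (-ln (1 - x)) (-ln u)^n (1 - 2x) / u, u = x (1 - x).
   The integrals of this nonnegative kernel over [c, 1/2] increase as c -> 0 and stay bounded,
   which gives the improper integral.  Since 1 - 2x = sqrt (1 - 4u),
     -2 ln (1 - x) = sum_(j >= 1) binom(2j, j) u^j / j,
   and truncating after K terms costs O(u^(K+1)).  Substituting u = x (1 - x), the j-th term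
   contributes binom(2j, j)/j * int_0^(1/4) u^(j-1) (-ln u)^n du = binom(2j, j) n! / j^(n+2) - O(3^n),
   while the truncation error is O(n! / (K+1)^(n+1)); all O(3^n) terms are o(n! / (K+1)^n). *)

From Pilot Require Import Defs.
From Stdlib Require Import Reals Lra Lia Arith Factorial Classical_Prop.
From Coquelicot Require Import Coquelicot.
Open Scope R_scope.

(* [auto_derive] unfolds [INR (S n)] into its defining match; fold it back. *)
Ltac fold_INR_S := repeat match goal with
  |- context [match ?n with 0%nat => 1 | S _ => INR ?n + 1 end] =>
    change (match n with 0%nat => 1 | S _ => INR n + 1 end) with (INR (S n)) end.

(* Coquelicot often leaves equalities stated in a structure carrier convertible to [R];
   restating them in [R] lets [ring] and [field] recognise them. *)
Ltac req := match goal with |- ?a = ?b => change (@eq R a b) end.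

Lemma is_RInt_derive_R (f df : R -> R) a b :
  (forall x, Rmin a b <= x <= Rmax a b -> is_derive f x (df x)) ->
  (forall x, Rmin a b <= x <= Rmax a b -> continuous df x) ->
  is_RInt df a b (f b - f a).
Proof. exact (is_RInt_derive (V := R_CompleteNormedModule) f df a b). Qed.

Lemma ex_RInt_continuous_R (f : R -> R) a b :
  (forall z, Rmin a b <= z <= Rmax a b -> continuous f z) -> ex_RInt f a b.
Proof. exact (ex_RInt_continuous (V := R_CompleteNormedModule) f a b). Qed.

Lemma ex_derive_continuous_R (f : R -> R) x : ex_derive f x -> continuous f x.
Proof. exact (ex_derive_continuous f x). Qed.

Lemma continuity_pt_of_is_derive (f : R -> R) x l : is_derive f x l -> continuity_pt f x.
Proof.
  intros H. apply continuity_pt_filterlim, ex_derive_continuous_R. exists l; exact H.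
Qed.

Lemma is_derive_Rmult (f g : R -> R) x df dg : is_derive f x df -> is_derive g x dg ->
  is_derive (fun t => f t * g t) x (df * g x + f x * dg).
Proof. intros H1 H2. exact (is_derive_mult f g x df dg H1 H2 Rmult_comm). Qed.

Lemma is_derive_sum_f_R0 (F dF : nat -> R -> R) k x :
  (forall i, (i <= k)%nat -> is_derive (F i) x (dF i x)) ->
  is_derive (fun t => sum_f_R0 (fun i => F i t) k) x (sum_f_R0 (fun i => dF i x) k).
Proof.
  induction k; intros H; simpl.
  - apply H. lia.
  - apply (is_derive_plus (fun t => sum_f_R0 (fun i => F i t) k) (F (S k))).
    + apply IHk. intros; apply H; lia.
    + apply H; lia.
Qed.

Lemma continuous_sum_f_R0 (F : nat -> R -> R) k x :
  (forall i, (i <= k)%nat -> continuous (F i) x) ->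
  continuous (fun t => sum_f_R0 (fun i => F i t) k) x.
Proof.
  induction k; intros H; simpl.
  - apply H. lia.
  - apply (continuous_plus (fun t => sum_f_R0 (fun i => F i t) k) (F (S k))).
    + apply IHk. intros; apply H; lia.
    + apply H; lia.
Qed.

Lemma INR_S_pos n : 0 < INR (S n).
Proof. apply lt_0_INR; lia. Qed.

Lemma INR_ge_1 m : (1 <= m)%nat -> 1 <= INR m.
Proof. intros h. apply (le_INR 1 m) in h. simpl in h. lra. Qed.

Lemma pow_le_1 x m : 0 <= x <= 1 -> 0 <= x ^ m <= 1.
Proof. intros h. split; [apply pow_le; lra|]. rewrite <- (pow1 m). apply pow_incr; lra. Qed.

Lemma ln_le_sub_1 y : 0 < y -> ln y <= y - 1.
Proof. intros h. generalize (exp_ineq1_le (ln y)). rewrite exp_ln by lra. lra. Qed.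

Lemma opp_ln_nonneg x : 0 < x <= 1 -> 0 <= - ln x.
Proof. intros h. assert (ln x <= ln 1) by (apply ln_le; lra). rewrite ln_1 in H. lra. Qed.

Lemma opp_ln_half_le_1 : 0 <= - ln (1/2) <= 1.
Proof.
  split; [apply opp_ln_nonneg; lra|].
  replace (1/2) with (/ 2) by lra. rewrite ln_Rinv by lra.
  generalize (ln_le_sub_1 2 ltac:(lra)). lra.
Qed.

Lemma opp_ln_1_minus_le x : 0 < x <= 1/2 -> 0 <= - ln (1 - x) <= 2 * x.
Proof.
  intros h. split; [apply opp_ln_nonneg; lra|].
  assert (H : ln (/ (1 - x)) <= / (1 - x) - 1)
    by (apply ln_le_sub_1, Rinv_0_lt_compat; lra).
  rewrite ln_Rinv in H by lra.
  assert (/ (1 - x) <= 1 + 2 * x); [|lra].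
  apply (Rmult_le_reg_l (1 - x)); [lra|]. rewrite Rinv_r by lra. nra.
Qed.

Lemma pow_le_fact_mul_exp y m : 0 <= y -> y ^ m <= INR (fact m) * exp y.
Proof.
  intros h. assert (hf := INR_fact_lt_0 m).
  assert (H : y ^ m / INR (fact m) <= exp y).
  { eapply Rle_trans; [|apply (exp_ge_taylor y m h)].
    destruct m; [simpl; lra|]. rewrite tech5.
    enough (0 <= sum_f_R0 (fun k => y ^ k / INR (fact k)) m) by lra.
    apply cond_pos_sum. intros k. apply Rmult_le_pos; [apply pow_le; auto|].
    apply Rlt_le, Rinv_0_lt_compat, INR_fact_lt_0. }
  apply (Rmult_le_compat_l (INR (fact m))) in H; [|lra].
  replace (INR (fact m) * (y ^ m / INR (fact m))) with (y ^ m) in H by (field; lra). exact H.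
Qed.

(* Writing x = e^c e^(-y) with y = c - ln x, this is y^(m+1) <= (m+1)! e^y. *)
Lemma mul_opp_ln_pow_le c m x : 0 < x -> 0 <= c + - ln x ->
  x * (c + - ln x) ^ m * (c + - ln x) <= exp c * INR (fact (S m)).
Proof.
  intros hx hy. set (y := c + - ln x) in *.
  assert (hxe : x = exp c / exp y).
  { unfold Rdiv. rewrite <- exp_Ropp, <- exp_plus. unfold y.
    replace (c + - (c + - ln x)) with (ln x) by ring. rewrite exp_ln; lra. }
  assert (H := pow_le_fact_mul_exp y (S m) hy).
  assert (hey := exp_pos y). assert (hec := exp_pos c).
  rewrite hxe. replace (exp c / exp y * y ^ m * y) with (exp c / exp y * y ^ S m) by (simpl; ring).
  apply (Rmult_le_reg_l (exp y / exp c)); [apply Rdiv_lt_0_compat; lra|].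
  replace (exp y / exp c * (exp c / exp y * y ^ S m)) with (y ^ S m) by (field; lra).
  replace (exp y / exp c * (exp c * INR (fact (S m)))) with (INR (fact (S m)) * exp y)
    by (field; lra).
  exact H.
Qed.

Lemma mul_opp_ln_pow_small c m eps : 0 <= c -> 0 < eps ->
  exists d, 0 < d <= 1 /\ forall x, 0 < x < d -> x * (c + - ln x) ^ m < eps.
Proof.
  intros hc he.
  set (Y := exp c * INR (fact (S m)) / eps).
  assert (hY : 0 < Y).
  { apply Rdiv_lt_0_compat; [apply Rmult_lt_0_compat; [apply exp_pos|apply INR_fact_lt_0]|lra]. }
  exists (Rmin 1 (exp (- Y))). split.
  { split; [apply Rmin_glb_lt; [lra|apply exp_pos]|apply Rmin_l]. }
  intros x [hx0 hx1].
  assert (hlnx : Y < - ln x).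
  { assert (ln x < ln (exp (- Y))) by (apply ln_increasing; [lra|]; eapply Rlt_le_trans; [apply hx1|apply Rmin_r]).
    rewrite ln_exp in H. lra. }
  assert (H := mul_opp_ln_pow_le c m x hx0 ltac:(lra)).
  assert (hYe : exp c * INR (fact (S m)) = Y * eps) by (unfold Y; field; lra).
  apply (Rmult_lt_reg_r (c + - ln x)); [lra|]. nra.
Qed.

Lemma pow_add_sub_pow_le A B m : 0 <= A -> 0 <= B ->
  (A + B) ^ S m - A ^ S m <= INR (S m) * B * (A + B) ^ m.
Proof.
  intros hA hB. induction m.
  - simpl. lra.
  - set (P := A + B) in *.
    assert (hAP : A ^ S m <= P ^ S m) by (apply pow_incr; unfold P; lra).
    assert (hstep : P ^ S (S m) - A ^ S (S m) = P * (P ^ S m - A ^ S m) + B * A ^ S m)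
      by (simpl; unfold P; ring).
    assert (P * (P ^ S m - A ^ S m) <= P * (INR (S m) * B * P ^ m))
      by (apply Rmult_le_compat_l; [unfold P; lra|exact IHm]).
    assert (B * A ^ S m <= B * P ^ S m) by (apply Rmult_le_compat_l; lra).
    rewrite hstep, S_INR. rewrite <- (tech_pow_Rmult P m) in *. nra.
Qed.

(** * The inner integral and the fold at 1/2 *)

Definition inner_int (n : nat) (x : R) : R :=
  ((- ln (x * (1 - x))) ^ S n - (- ln x) ^ S n) / (INR (S n) * x).

Lemma inner_int_is_RInt n x : 0 < x < 1 ->
  Defs.is_RInt (integrand n x) (1 - x) 1 (inner_int n x).
Proof.
  intros [h0 h1]. assert (HS := INR_S_pos n).
  set (F := fun y => - (- ln (x * y)) ^ S n / (INR (S n) * x)).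
  assert (HD : forall y, 0 < y -> is_derive F y (integrand n x y)).
  { intros y hy. unfold F. auto_derive; [apply Rmult_lt_0_compat; lra|].
    fold_INR_S. unfold integrand. field.
    repeat split; try lra; apply Rgt_not_eq, Rmult_lt_0_compat; lra. }
  assert (HC : forall y, 0 < y -> continuous (integrand n x) y).
  { intros y hy. apply ex_derive_continuous_R. unfold integrand. auto_derive.
    repeat split; try lra; try (apply Rmult_lt_0_compat; lra);
      apply Rgt_not_eq, Rmult_lt_0_compat; lra. }
  assert (Hint : is_RInt (integrand n x) (1 - x) 1 (F 1 - F (1 - x))).
  { apply is_RInt_derive_R; intros y hy;
      rewrite Rmin_left, Rmax_right in hy by lra; [apply HD|apply HC]; lra. }
  exists (ex_RInt_Reals_0 _ _ _ (ex_intro _ _ Hint)).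
  rewrite <- RInt_Reals, (is_RInt_unique _ _ _ _ Hint).
  unfold F, inner_int. rewrite Rmult_1_r. field. lra.
Qed.

Lemma inner_int_continuous n x : 0 < x < 1 -> continuous (inner_int n) x.
Proof.
  intros hx. assert (HS := INR_S_pos n). apply ex_derive_continuous_R.
  unfold inner_int. auto_derive. fold_INR_S.
  repeat split; try lra; try nra; apply Rgt_not_eq, Rmult_lt_0_compat; lra.
Qed.

Lemma inner_int_reflect_continuous n x : 0 < x < 1 ->
  continuous (fun y => inner_int n (1 - y)) x.
Proof.
  intros hx. assert (HS := INR_S_pos n). apply ex_derive_continuous_R.
  unfold inner_int. auto_derive. fold_INR_S.
  repeat split; try lra; try nra; apply Rgt_not_eq, Rmult_lt_0_compat; lra.
Qed.

Lemma ex_RInt_inner_int n a b : 0 < a -> a <= b -> b < 1 -> ex_RInt (inner_int n) a b.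
Proof.
  intros h1 h2 h3. apply ex_RInt_continuous_R. intros z hz.
  rewrite Rmin_left, Rmax_right in hz by lra. apply inner_int_continuous; lra.
Qed.

Lemma inner_int_nonneg n x : 0 < x < 1 -> 0 <= inner_int n x.
Proof.
  intros hx. unfold inner_int.
  assert (- ln x <= - ln (x * (1 - x))) by (assert (ln (x * (1 - x)) <= ln x) by (apply ln_le; nra); lra).
  assert ((- ln x) ^ S n <= (- ln (x * (1 - x))) ^ S n)
    by (apply pow_incr; split; [apply opp_ln_nonneg; lra|lra]).
  apply Rdiv_le_0_compat; [lra|]. apply Rmult_lt_0_compat; [apply INR_S_pos|lra].
Qed.

Lemma RInt_inner_int_nonneg n a b : 0 < a <= b -> b < 1 -> 0 <= RInt (inner_int n) a b.
Proof.
  intros h1 h2. apply RInt_ge_0; [lra|apply ex_RInt_inner_int; lra|].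
  intros x hx. apply inner_int_nonneg; lra.
Qed.

Lemma RInt_inner_int_Chasles n a b c : 0 < a <= b -> b <= c -> c < 1 ->
  RInt (inner_int n) a b + RInt (inner_int n) b c = RInt (inner_int n) a c.
Proof.
  intros h1 h2 h3.
  exact (RInt_Chasles (V := R_CompleteNormedModule) (inner_int n) a b c
           ltac:(apply ex_RInt_inner_int; lra) ltac:(apply ex_RInt_inner_int; lra)).
Qed.

Lemma RInt_inner_int_reflect n c : 0 < c <= 1/2 ->
  RInt (fun y => inner_int n (1 - y)) c (1/2) = RInt (inner_int n) (1/2) (1 - c).
Proof.
  intros hc.
  assert (Hex : ex_RInt (fun y => inner_int n (1 - y)) c (1/2)).
  { apply ex_RInt_continuous_R. intros z hz. rewrite Rmin_left, Rmax_right in hz by lra.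
    apply inner_int_reflect_continuous; lra. }
  assert (H := RInt_comp_lin (inner_int n) (-1) 1 c (1/2)).
  replace (-1 * c + 1) with (1 - c) in H by ring.
  replace (-1 * (1/2) + 1) with (1/2) in H by field.
  specialize (H ltac:(apply ex_RInt_swap, ex_RInt_inner_int; lra)).
  assert (Hl : RInt (fun y => scal (-1) (inner_int n (-1 * y + 1))) c (1/2)
               = - RInt (fun y => inner_int n (1 - y)) c (1/2)).
  { transitivity (RInt (fun y => - inner_int n (1 - y)) c (1/2)).
    - apply RInt_ext. intros x _. replace (-1 * x + 1) with (1 - x) by ring.
      change (-1 * inner_int n (1 - x) = - inner_int n (1 - x)). ring.
    - exact (RInt_opp (V := R_CompleteNormedModule) _ _ _ Hex). }
  assert (Hr : RInt (inner_int n) (1 - c) (1/2) = - RInt (inner_int n) (1/2) (1 - c))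
    by exact (eq_sym (opp_RInt_swap (V := R_CompleteNormedModule) (inner_int n) (1/2) (1 - c)
                        ltac:(apply ex_RInt_inner_int; lra))).
  assert (H' : RInt (fun y => scal (-1) (inner_int n (-1 * y + 1))) c (1/2)
                = RInt (inner_int n) (1 - c) (1/2)) by exact H.
  rewrite Hl, Hr in H'. lra.
Qed.

Definition log_kernel (n : nat) (x : R) : R :=
  2 * (- ln (1 - x)) * (- ln x + - ln (1 - x)) ^ n * (1 - 2 * x) / (x * (1 - x)).

Definition fold_corr (n : nat) (x : R) : R :=
  2 * (- ln (1 - x)) * (- ln x + - ln (1 - x)) ^ S n / INR (S n)
  + ((- ln x) ^ S (S n) - (- ln x + - ln (1 - x)) ^ S (S n) - (- ln (1 - x)) ^ S (S n))
    / (INR (S n) * INR (S (S n))).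

Lemma fold_corr_derive n x : 0 < x < 1 ->
  is_derive (fold_corr n) x (inner_int n x + inner_int n (1 - x) - log_kernel n x).
Proof.
  intros hx. unfold fold_corr. auto_derive; [repeat split; lra|].
  fold_INR_S. unfold inner_int, log_kernel.
  replace (1 - (1 - x)) with x by ring. rewrite !ln_mult by lra.
  replace (1 + - x) with (1 - x) by ring.
  set (a := ln x). set (b := ln (1 - x)).
  replace (- (a + b)) with (- a + - b) by ring.
  replace (- (b + a)) with (- a + - b) by ring.
  rewrite <- !tech_pow_Rmult, S_INR. assert (0 <= INR n) by apply pos_INR.
  field. repeat split; lra.
Qed.

Lemma log_kernel_continuous n x : 0 < x < 1 -> continuous (log_kernel n) x.
Proof.
  intros hx. apply ex_derive_continuous_R. unfold log_kernel. auto_derive.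
  repeat split; try lra. nra.
Qed.

Lemma fold_corr_abs_le n x : 0 < x <= 1/2 ->
  Rabs (fold_corr n x) <= 4 * (- ln (1 - x)) * (1 + - ln x) ^ S n.
Proof.
  intros hx. unfold fold_corr.
  assert (hA : 0 <= - ln x) by (apply opp_ln_nonneg; lra).
  assert (hB := opp_ln_1_minus_le x hx).
  set (A := - ln x) in *. set (B := - ln (1 - x)) in *. set (Y := 1 + A).
  assert (hS1 : 1 <= INR (S n)) by (apply INR_ge_1; lia).
  assert (hS2 : INR (S (S n)) = INR (S n) + 1) by apply S_INR.
  assert (hPY : (A + B) ^ S n <= Y ^ S n) by (apply pow_incr; unfold Y; lra).
  assert (hP0 : 0 <= (A + B) ^ S n) by (apply pow_le; lra).
  assert (hBn : B ^ S (S n) <= B * (A + B) ^ S n)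
    by (rewrite <- tech_pow_Rmult; apply Rmult_le_compat_l; [lra|apply pow_incr; lra]).
  assert (hB0 : 0 <= B ^ S (S n)) by (apply pow_le; lra).
  assert (hA0 : A ^ S (S n) <= (A + B) ^ S (S n)) by (apply pow_incr; lra).
  assert (hdiff := pow_add_sub_pow_le A B (S n) hA ltac:(lra)).
  assert (T1 : 0 <= 2 * B * (A + B) ^ S n / INR (S n) <= 2 * B * Y ^ S n).
  { split; [apply Rdiv_le_0_compat; nra|].
    apply Rle_trans with (2 * B * (A + B) ^ S n); [|nra].
    apply Rle_div_l; nra. }
  set (N := A ^ S (S n) - (A + B) ^ S (S n) - B ^ S (S n)).
  assert (hBY : 0 <= B * Y ^ S n) by nra.
  assert (hBP : B * (A + B) ^ S n <= B * Y ^ S n) by (apply Rmult_le_compat_l; lra).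
  assert (INR (S (S n)) * B * (A + B) ^ S n <= INR (S (S n)) * (B * Y ^ S n))
    by (rewrite Rmult_assoc; apply Rmult_le_compat_l; [apply pos_INR|lra]).
  assert ((INR (S (S n)) - 1) * (B * Y ^ S n) >= 0) by (apply Rle_ge, Rmult_le_pos; lra).
  assert (hN : 0 <= - N <= 2 * INR (S (S n)) * (B * Y ^ S n)) by (unfold N; lra).
  assert (T2 : Rabs (N / (INR (S n) * INR (S (S n)))) <= 2 * B * Y ^ S n).
  { unfold Rdiv. rewrite Rabs_mult, Rabs_inv, (Rabs_right (_ * _)), Rabs_left1 by nra.
    apply (Rmult_le_reg_r (INR (S n) * INR (S (S n)))); [nra|].
    rewrite Rmult_assoc, Rinv_l, Rmult_1_r by nra. nra. }
  eapply Rle_trans; [apply Rabs_triang|]. rewrite Rabs_right by lra.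
  fold N. lra.
Qed.

(** * Logarithmic moments *)

(* The primitive of [t ^ i * (- ln t) ^ n] vanishing at [0] (integrate by parts [n] times). *)
Fixpoint log_moment (i n : nat) (u : R) : R :=
  match n with
  | O => u ^ S i / INR (S i)
  | S m => u ^ S i * (- ln u) ^ S m / INR (S i) + INR (S m) / INR (S i) * log_moment i m u
  end.

Lemma is_derive_pow_S i u : is_derive (fun t => t ^ S i) u (INR (S i) * u ^ i).
Proof.
  assert (H := is_derive_pow (fun t => t) (S i) u 1 (is_derive_id u)).
  simpl pred in H. rewrite Rmult_1_r in H. exact H.
Qed.

Lemma log_moment_derive i n u : 0 < u -> is_derive (log_moment i n) u ((- ln u) ^ n * u ^ i).
Proof.
  intros hu. assert (hS := INR_S_pos i).
  induction n; cbn [log_moment].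
  - apply (is_derive_ext (fun t => / INR (S i) * t ^ S i)); [intros t; unfold Rdiv; req; ring|].
    replace ((- ln u) ^ 0 * u ^ i) with (/ INR (S i) * (INR (S i) * u ^ i)) by (rewrite pow_O; field; lra).
    apply is_derive_scal, is_derive_pow_S.
  - assert (Hln : is_derive (fun t => (- ln t) ^ S n) u (INR (S n) * (- / u) * (- ln u) ^ n)).
    { apply (is_derive_pow (fun t => - ln t) (S n) u). auto_derive; [lra|field; lra]. }
    assert (H1 := is_derive_scal _ u (/ INR (S i)) _
                    (is_derive_Rmult _ _ u _ _ (is_derive_pow_S i u) Hln)).
    assert (H2 := is_derive_scal (log_moment i n) u (INR (S n) / INR (S i)) _ IHn).
    assert (H := is_derive_plus _ _ u _ _ H1 H2). cbv beta in H.
    eapply is_derive_ext; [|eapply is_derive_ext_loc; [apply filter_forall; intros; reflexivity|]].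
    2: { replace ((- ln u) ^ S n * u ^ i) with
           (plus (/ INR (S i) * (INR (S i) * u ^ i * (- ln u) ^ S n
                                 + u ^ S i * (INR (S n) * - / u * (- ln u) ^ n)))
                 (INR (S n) / INR (S i) * ((- ln u) ^ n * u ^ i))); [exact H|].
         change (plus ?a ?b) with (a + b). rewrite <- !tech_pow_Rmult. req. field. lra. }
    intros t. change (plus ?a ?b) with (a + b). req. unfold Rdiv. ring.
Qed.

Lemma log_moment_one i n : log_moment i n 1 = INR (fact n) / INR (S i) ^ S n.
Proof.
  assert (hS := INR_S_pos i).
  induction n; cbn [log_moment].
  - rewrite pow1, pow_1. change (INR (fact 0)) with 1. field. lra.
  - rewrite ln_1, pow1, IHn, Ropp_0, pow_i, fact_simpl, mult_INR by lia.
    rewrite <- !tech_pow_Rmult. field. split; [apply pow_nonzero|]; lra.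
Qed.

Lemma log_moment_nonneg i n u : 0 < u <= 1 -> 0 <= log_moment i n u.
Proof.
  intros hu. assert (hS := INR_S_pos i). assert (hl := opp_ln_nonneg u hu).
  assert (0 <= u ^ S i) by (apply pow_le; lra).
  induction n; cbn [log_moment].
  - apply Rdiv_le_0_compat; lra.
  - apply Rplus_le_le_0_compat.
    + apply Rdiv_le_0_compat; [apply Rmult_le_pos; [|apply pow_le]|]; lra.
    + apply Rmult_le_pos; [apply Rdiv_le_0_compat; [apply pos_INR|lra]|exact IHn].
Qed.

Lemma log_moment_le i n u : 0 < u <= 1 ->
  log_moment i n u <= INR (fact (S n)) * (u * (1 + - ln u) ^ n).
Proof.
  intros hu. assert (hS := INR_ge_1 (S i) ltac:(lia)). assert (hl := opp_ln_nonneg u hu).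
  assert (hui : 0 <= u ^ S i <= u).
  { split; [apply pow_le; lra|]. rewrite <- tech_pow_Rmult.
    assert (H := pow_le_1 u i ltac:(lra)). nra. }
  assert (hinv : 0 < / INR (S i) <= 1).
  { split; [apply Rinv_0_lt_compat; lra|]. rewrite <- Rinv_1. apply Rinv_le_contravar; lra. }
  induction n; cbn [log_moment].
  - rewrite pow_O. change (INR (fact 1)) with 1. unfold Rdiv. nra.
  - set (X := (1 + - ln u) ^ S n).
    assert (hX : 0 <= (- ln u) ^ S n <= X) by (split; [apply pow_le|apply pow_incr]; lra).
    assert (hXn : 0 <= (1 + - ln u) ^ n <= X).
    { split; [apply pow_le; lra|]. unfold X. rewrite <- tech_pow_Rmult.
      assert (0 <= (1 + - ln u) ^ n) by (apply pow_le; lra). nra. }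
    assert (hQ := log_moment_nonneg i n u hu).
    assert (t1 : u ^ S i * (- ln u) ^ S n / INR (S i) <= u * X).
    { unfold Rdiv. assert (u ^ S i * (- ln u) ^ S n <= u * X) by (apply Rmult_le_compat; lra).
      assert (0 <= u ^ S i * (- ln u) ^ S n) by (apply Rmult_le_pos; lra). nra. }
    assert (t2 : INR (S n) / INR (S i) * log_moment i n u <= INR (S n) * (INR (fact (S n)) * (u * X))).
    { assert (log_moment i n u <= INR (fact (S n)) * (u * X)).
      { eapply Rle_trans; [apply IHn|]. apply Rmult_le_compat_l; [apply pos_INR|].
        apply Rmult_le_compat_l; lra. }
      assert (0 <= INR (S n)) by apply pos_INR.
      unfold Rdiv. rewrite Rmult_assoc. apply Rmult_le_compat_l; [lra|]. nra. }
    assert (hf : INR (S n) * INR (fact (S n)) + 1 <= INR (fact (S (S n)))).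
    { rewrite (fact_simpl (S n)), mult_INR, (S_INR (S n)).
      assert (1 <= INR (fact (S n))) by (apply INR_ge_1, lt_O_fact). nra. }
    assert (0 <= u * X) by (apply Rmult_le_pos; [|unfold X; apply pow_le]; lra).
    nra.
Qed.

Lemma log_moment_increment_le i n :
  0 <= log_moment i n 1 - log_moment i n (1/4) <= 3 ^ n.
Proof.
  destruct (MVT_gen (log_moment i n) (1/4) 1 (fun u => (- ln u) ^ n * u ^ i)) as [c [hc he]].
  - intros x hx. rewrite Rmin_left, Rmax_right in hx by lra. apply log_moment_derive; lra.
  - intros x hx. rewrite Rmin_left, Rmax_right in hx by lra.
    eapply continuity_pt_of_is_derive, log_moment_derive; lra.
  - rewrite Rmin_left, Rmax_right in hc by lra. rewrite he.
    assert (hl3 : 0 <= - ln c <= 3).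
    { split; [apply opp_ln_nonneg; lra|].
      assert (ln (/ 4) <= ln c) by (apply ln_le; lra).
      generalize (ln_le_sub_1 4 ltac:(lra)). rewrite ln_Rinv in H by lra. lra. }
    assert (h3 : 0 <= (- ln c) ^ n <= 3 ^ n) by (split; [apply pow_le|apply pow_incr]; lra).
    assert (h4 := pow_le_1 c i ltac:(lra)).
    split; nra.
Qed.

(** * The central binomial series of -2 ln (1 - x) *)

Definition uprod (x : R) : R := x * (1 - x).

Lemma uprod_pos x : 0 < x < 1 -> 0 < uprod x.
Proof. intros h. unfold uprod. nra. Qed.

Lemma uprod_le_1 x : 0 < x <= 1/2 -> 0 < uprod x <= 1.
Proof. intros h. unfold uprod. split; nra. Qed.

Lemma uprod_le a b : 0 <= a <= b -> b <= 1/2 -> 0 <= uprod a <= uprod b.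
Proof. intros h1 h2. unfold uprod. split; nra. Qed.

Lemma is_derive_uprod x : is_derive uprod x (1 - 2 * x).
Proof. unfold uprod. auto_derive; auto. req. ring. Qed.

Definition cbin (j : nat) : R := Binomial.C (2 * j) j.

Lemma cbin_pos j : 0 < cbin j.
Proof.
  unfold cbin, Binomial.C. apply Rdiv_lt_0_compat; [apply INR_fact_lt_0|].
  apply Rmult_lt_0_compat; apply INR_fact_lt_0.
Qed.

Lemma cbin_1 : cbin 1 = 2.
Proof. unfold cbin, Binomial.C. simpl. field. Qed.

Lemma cbin_succ m : INR (S m) * cbin (S m) = INR (4 * m + 2) * cbin m.
Proof.
  unfold cbin, Binomial.C.
  replace (2 * S m)%nat with (S (S (2 * m))) by lia.
  replace (S (S (2 * m)) - S m)%nat with (S m) by lia.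
  replace (2 * m - m)%nat with m by lia.
  rewrite !fact_simpl, !mult_INR.
  replace (INR (4 * m + 2)) with (2 * (2 * INR m + 1)) by (rewrite plus_INR, mult_INR; simpl; ring).
  rewrite !S_INR, mult_INR. simpl (INR 2).
  assert (h1 := INR_fact_lt_0 m). assert (h2 := INR_fact_lt_0 (2 * m)).
  assert (0 <= INR m) by apply pos_INR.
  field. lra.
Qed.

(* Coefficients of [-2 ln (1 - x) = sum_(j >= 1) binom(2j, j) u ^ j / j] with [u = x (1 - x)]. *)
Definition series_coef (i : nat) : R := cbin (S i) / INR (S i).

Lemma series_coef_pos i : 0 < series_coef i.
Proof. apply Rdiv_lt_0_compat; [apply cbin_pos|apply INR_S_pos]. Qed.

Definition log_series (k : nat) (u : R) : R := sum_f_R0 (fun i => series_coef i * u ^ S i) k.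

Definition log_series_deriv (k : nat) (u : R) : R := sum_f_R0 (fun i => cbin (S i) * u ^ i) k.

Lemma log_series_derive k u : is_derive (log_series k) u (log_series_deriv k u).
Proof.
  apply (is_derive_sum_f_R0 (fun i t => series_coef i * t ^ S i) (fun i t => cbin (S i) * t ^ i)).
  intros i _. replace (cbin (S i) * u ^ i) with (series_coef i * (INR (S i) * u ^ i)).
  - apply is_derive_scal, is_derive_pow_S.
  - unfold series_coef. field. apply Rgt_not_eq, INR_S_pos.
Qed.

Lemma log_series_0 k : log_series k 0 = 0.
Proof. unfold log_series. induction k; [simpl; ring|]. rewrite tech5, IHk. simpl; ring. Qed.

Lemma log_series_deriv_0 k : log_series_deriv k 0 = 2.
Proof.
  unfold log_series_deriv. induction k; [simpl; rewrite cbin_1; ring|].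
  rewrite tech5, IHk. simpl; ring.
Qed.

Lemma log_series_factor k u :
  log_series k u = u * sum_f_R0 (fun i => series_coef i * u ^ i) k.
Proof.
  unfold log_series. induction k; [simpl; ring|].
  rewrite !tech5, IHk, <- tech_pow_Rmult. ring.
Qed.

Definition series_rem (k : nat) (x : R) : R := 2 * (- ln (1 - x)) - log_series k (uprod x).

Definition series_rem_deriv (k : nat) (x : R) : R :=
  2 / (1 - x) - (1 - 2 * x) * log_series_deriv k (uprod x).

Lemma series_rem_derive k x : x < 1 -> is_derive (series_rem k) x (series_rem_deriv k x).
Proof.
  intros hx.
  assert (H1 : is_derive (fun t => 2 * (- ln (1 - t))) x (2 / (1 - x)))
    by (auto_derive; [lra|field; lra]).
  assert (H2 : is_derive (fun t => log_series k (uprod t)) x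
                 ((1 - 2 * x) * log_series_deriv k (uprod x)))
    by exact (is_derive_comp (log_series k) uprod x _ _
                (log_series_derive k (uprod x)) (is_derive_uprod x)).
  exact (is_derive_minus _ _ x _ _ H1 H2).
Qed.

(* [rem_numer k x = uprod x * series_rem_deriv k x]. *)
Definition rem_numer (k : nat) (x : R) : R :=
  2 * x - (1 - 2 * x) * uprod x * log_series_deriv k (uprod x).

Definition rem_const (k : nat) : R := INR (4 * k + 6) * cbin (S k).

Lemma rem_const_pos k : 0 < rem_const k.
Proof. apply Rmult_lt_0_compat; [apply lt_0_INR; lia|apply cbin_pos]. Qed.

(* The derivative telescopes by [cbin_succ]: this is what makes [log_series] the
   expansion of [-2 ln (1 - x)]. *)
Lemma rem_numer_derive k x :
  is_derive (rem_numer k) x (rem_const k * uprod x ^ S k).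
Proof.
  unfold rem_const. induction k.
  - unfold rem_numer, log_series_deriv, uprod. simpl sum_f_R0. rewrite cbin_1.
    auto_derive; auto. simpl. req. ring.
  - apply (is_derive_ext (fun t => rem_numer k t
             - cbin (S (S k)) * ((1 - 2 * t) * uprod t ^ S (S k)))).
    { intros t. unfold rem_numer, log_series_deriv. rewrite tech5, <- (tech_pow_Rmult _ (S k)).
      req. ring. }
    assert (H2 : is_derive (fun t => (1 - 2 * t) * uprod t ^ S (S k)) x
       (-2 * uprod x ^ S (S k) + (1 - 2 * x) * (INR (S (S k)) * (1 - 2 * x) * uprod x ^ S k))).
    { apply (is_derive_Rmult (fun t => 1 - 2 * t)); [auto_derive; auto; ring|].
      apply (is_derive_pow uprod (S (S k))), is_derive_uprod. }
    eapply is_derive_ext; [intros; reflexivity|].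
    replace (INR (4 * S k + 6) * cbin (S (S k)) * uprod x ^ S (S k))
      with (minus (INR (4 * k + 6) * cbin (S k) * uprod x ^ S k)
              (scal (cbin (S (S k)))
                 (-2 * uprod x ^ S (S k)
                  + (1 - 2 * x) * (INR (S (S k)) * (1 - 2 * x) * uprod x ^ S k)))).
    { exact (is_derive_minus _ _ x _ _ IHk (is_derive_scal _ x _ _ H2)). }
    assert (hr := cbin_succ (S k)).
    assert (hY : cbin (S (S k)) = INR (4 * S k + 2) * cbin (S k) / INR (S (S k)))
      by (rewrite <- hr; field; apply Rgt_not_eq, INR_S_pos).
    rewrite hY. change (minus ?a ?b) with (a - b). change (scal ?a ?b) with (a * b).
    rewrite <- !tech_pow_Rmult.
    replace (INR (4 * S k + 2)) with (4 * INR k + 6)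
      by (replace (4 * S k + 2)%nat with (4 * k + 6)%nat by lia; rewrite plus_INR, mult_INR; simpl; ring).
    replace (INR (4 * S k + 6)) with (4 * INR k + 10)
      by (replace (4 * S k + 6)%nat with (4 * k + 10)%nat by lia; rewrite plus_INR, mult_INR; simpl; ring).
    replace (INR (4 * k + 6)) with (4 * INR k + 6) by (rewrite plus_INR, mult_INR; simpl; ring).
    rewrite !S_INR. assert (0 <= INR k) by apply pos_INR.
    unfold uprod. req. field. lra.
Qed.

Lemma rem_numer_bounds k x : 0 <= x <= 1/2 ->
  0 <= rem_numer k x <= rem_const k * x * uprod x ^ S k.
Proof.
  intros hx.
  destruct (MVT_gen (rem_numer k) 0 x (fun t => rem_const k * uprod t ^ S k)) as [c [hc he]].
  - intros t _. apply rem_numer_derive.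
  - intros t _. eapply continuity_pt_of_is_derive, rem_numer_derive.
  - rewrite Rmin_left, Rmax_right in hc by lra.
    replace (rem_numer k 0) with 0 in he by (unfold rem_numer, uprod; ring).
    assert (hu := uprod_le c x ltac:(lra) ltac:(lra)).
    assert (hp : 0 <= uprod c ^ S k <= uprod x ^ S k) by (split; [apply pow_le|apply pow_incr]; lra).
    assert (hL := rem_const_pos k).
    replace (rem_numer k x) with (rem_const k * uprod c ^ S k * x) by lra.
    split; [apply Rmult_le_pos; [apply Rmult_le_pos|]; lra|].
    rewrite (Rmult_assoc (rem_const k) x), (Rmult_comm x), <- Rmult_assoc.
    apply Rmult_le_compat_r; [lra|]. apply Rmult_le_compat_l; lra.
Qed.

Lemma series_rem_deriv_bounds k c : 0 <= c <= 1/2 ->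
  0 <= series_rem_deriv k c <= rem_const k * c * uprod c ^ k.
Proof.
  intros hc. destruct (Req_dec c 0) as [->|hc0].
  - unfold series_rem_deriv, uprod. rewrite Rmult_0_l, log_series_deriv_0.
    replace (2 / (1 - 0) - (1 - 2 * 0) * 2) with 0 by field. lra.
  - assert (hu : 0 < uprod c) by (apply uprod_pos; lra).
    assert (hN := rem_numer_bounds k c hc).
    replace (rem_numer k c) with (series_rem_deriv k c * uprod c) in hN
      by (unfold rem_numer, series_rem_deriv, uprod in *; field; lra).
    rewrite <- tech_pow_Rmult in hN.
    split; apply (Rmult_le_reg_r (uprod c)); nra.
Qed.

Lemma series_rem_bounds k x : 0 <= x <= 1/2 ->
  0 <= series_rem k x <= 4 * rem_const k * uprod x ^ S (S k).
Proof.
  intros hx.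
  destruct (MVT_gen (series_rem k) 0 x (series_rem_deriv k)) as [c [hc he]].
  - intros t ht. rewrite Rmin_left, Rmax_right in ht by lra. apply series_rem_derive; lra.
  - intros t ht. rewrite Rmin_left, Rmax_right in ht by lra.
    eapply continuity_pt_of_is_derive, series_rem_derive; lra.
  - rewrite Rmin_left, Rmax_right in hc by lra.
    replace (series_rem k 0) with 0 in he
      by (unfold series_rem, uprod; rewrite Rmult_0_l, log_series_0; replace (1 - 0) with 1 by ring; rewrite ln_1; ring).
    rewrite Rminus_0_r in he.
    assert (hd := series_rem_deriv_bounds k c ltac:(lra)).
    assert (hL := rem_const_pos k).
    assert (hu := uprod_le c x ltac:(lra) ltac:(lra)).
    assert (hp : 0 <= uprod c ^ k <= uprod x ^ k) by (split; [apply pow_le|apply pow_incr]; lra).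
    assert (hx2 : x <= 2 * uprod x) by (unfold uprod; nra).
    assert (hdx : series_rem_deriv k c <= rem_const k * x * uprod x ^ k).
    { eapply Rle_trans; [apply hd|].
      apply Rmult_le_compat; [nra|lra|apply Rmult_le_compat_l; lra|lra]. }
    rewrite he. rewrite <- !tech_pow_Rmult.
    split; [nra|].
    assert (series_rem_deriv k c * x <= rem_const k * x * x * uprod x ^ k) by nra.
    assert (x * x <= 4 * (uprod x * uprod x)) by nra.
    assert (rem_const k * uprod x ^ k * (x * x) <= rem_const k * uprod x ^ k * (4 * (uprod x * uprod x)))
      by (apply Rmult_le_compat_l; nra).
    nra.
Qed.

Definition moment_term (i n : nat) (x : R) : R :=
  (- ln (uprod x)) ^ n * uprod x ^ i * (1 - 2 * x).

Lemma log_moment_uprod_derive i n x : 0 < x < 1 ->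
  is_derive (fun t => log_moment i n (uprod t)) x (moment_term i n x).
Proof.
  intros hx.
  assert (H := is_derive_comp (log_moment i n) uprod x _ _
                 (log_moment_derive i n (uprod x) (uprod_pos x hx)) (is_derive_uprod x)).
  replace (moment_term i n x) with (scal (1 - 2 * x) ((- ln (uprod x)) ^ n * uprod x ^ i));
    [exact H|].
  unfold moment_term. change (scal ?a ?b) with (a * b). req. ring.
Qed.

Lemma moment_term_continuous i n x : 0 < x < 1 -> continuous (moment_term i n) x.
Proof.
  intros hx. assert (hu := uprod_pos x hx). apply ex_derive_continuous_R.
  unfold moment_term, uprod in *. auto_derive. auto.
Qed.

Lemma moment_term_nonneg i n x : 0 < x <= 1/2 -> 0 <= moment_term i n x.
Proof.
  intros hx. assert (hu := uprod_le_1 x hx). unfold moment_term.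
  apply Rmult_le_pos; [apply Rmult_le_pos; apply pow_le|]; [apply opp_ln_nonneg| |]; lra.
Qed.

Definition kernel_approx (k n : nat) (x : R) : R :=
  sum_f_R0 (fun i => series_coef i * moment_term i n x) k.

Definition kernel_approx_prim (k n : nat) (x : R) : R :=
  sum_f_R0 (fun i => series_coef i * log_moment i n (uprod x)) k.

Lemma kernel_approx_prim_derive k n x : 0 < x < 1 ->
  is_derive (kernel_approx_prim k n) x (kernel_approx k n x).
Proof.
  intros hx.
  apply (is_derive_sum_f_R0 (fun i t => series_coef i * log_moment i n (uprod t))
                            (fun i t => series_coef i * moment_term i n t)).
  intros i _. apply is_derive_scal, log_moment_uprod_derive, hx.
Qed.

Lemma kernel_approx_continuous k n x : 0 < x < 1 -> continuous (kernel_approx k n) x.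
Proof.
  intros hx.
  apply (continuous_sum_f_R0 (fun i t => series_coef i * moment_term i n t)).
  intros i _. apply (continuous_scal_r (series_coef i) (moment_term i n)).
  apply moment_term_continuous, hx.
Qed.

Lemma kernel_approx_prim_nonneg k n x : 0 < x <= 1/2 -> 0 <= kernel_approx_prim k n x.
Proof.
  intros hx. apply cond_pos_sum. intros i.
  apply Rmult_le_pos; [apply Rlt_le, series_coef_pos|apply log_moment_nonneg, uprod_le_1, hx].
Qed.

Lemma log_kernel_sub_approx n k x : 0 < x < 1 ->
  log_kernel n x - kernel_approx k n x
  = (- ln (uprod x)) ^ n * (1 - 2 * x) / uprod x * series_rem k x.
Proof.
  intros hx. assert (hu := uprod_pos x hx).
  assert (hs : kernel_approx k n x
               = (- ln (uprod x)) ^ n * (1 - 2 * x) * sum_f_R0 (fun i => series_coef i * uprod x ^ i) k).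
  { unfold kernel_approx, moment_term. induction k; [simpl; ring|]. rewrite !tech5, IHk. ring. }
  unfold log_kernel, series_rem. rewrite hs, log_series_factor.
  replace (- ln x + - ln (1 - x)) with (- ln (uprod x)) by (unfold uprod; rewrite ln_mult by lra; ring).
  unfold uprod in *. field. lra.
Qed.

Lemma log_kernel_sub_approx_bounds n k x : 0 < x <= 1/2 ->
  0 <= log_kernel n x - kernel_approx k n x <= 4 * rem_const k * moment_term (S k) n x.
Proof.
  intros hx. rewrite log_kernel_sub_approx by lra.
  assert (hu := uprod_le_1 x hx).
  assert (hD := series_rem_bounds k x ltac:(lra)).
  assert (hc : 0 <= (- ln (uprod x)) ^ n * (1 - 2 * x) / uprod x).
  { apply Rdiv_le_0_compat; [apply Rmult_le_pos; [apply pow_le, opp_ln_nonneg|]|]; lra. }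
  split; [nra|].
  replace (4 * rem_const k * moment_term (S k) n x)
     with ((- ln (uprod x)) ^ n * (1 - 2 * x) / uprod x * (4 * rem_const k * uprod x ^ S (S k)))
    by (unfold moment_term; rewrite <- (tech_pow_Rmult _ (S k)); field; lra).
  apply Rmult_le_compat_l; lra.
Qed.

Lemma log_kernel_nonneg n x : 0 < x <= 1/2 -> 0 <= log_kernel n x.
Proof.
  intros hx. assert (h := log_kernel_sub_approx_bounds n 0 x hx).
  assert (0 <= kernel_approx 0 n x); [|lra].
  apply Rmult_le_pos; [apply Rlt_le, series_coef_pos|apply moment_term_nonneg, hx].
Qed.

Definition kernel_int (n : nat) (c : R) : R := RInt (log_kernel n) c (1/2).

Lemma ex_RInt_log_kernel n a b : 0 < a -> a <= b -> b <= 1/2 -> ex_RInt (log_kernel n) a b.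
Proof.
  intros h1 h2 h3. apply ex_RInt_continuous_R. intros z hz.
  rewrite Rmin_left, Rmax_right in hz by lra. apply log_kernel_continuous; lra.
Qed.

Lemma kernel_int_bounds n k c : 0 < c <= 1/2 ->
  kernel_approx_prim k n (1/2) - kernel_approx_prim k n c <= kernel_int n c <=
  kernel_approx_prim k n (1/2) - kernel_approx_prim k n c
  + 4 * rem_const k * (log_moment (S k) n (uprod (1/2)) - log_moment (S k) n (uprod c)).
Proof.
  intros hc. unfold kernel_int.
  set (M := 4 * rem_const k).
  assert (Hex := ex_RInt_log_kernel n c (1/2) ltac:(lra) ltac:(lra) ltac:(lra)).
  assert (H1 : is_RInt (kernel_approx k n) c (1/2)
                 (kernel_approx_prim k n (1/2) - kernel_approx_prim k n c)).
  { apply is_RInt_derive_R; intros x hx; rewrite Rmin_left, Rmax_right in hx by lra.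
    - apply kernel_approx_prim_derive; lra.
    - apply kernel_approx_continuous; lra. }
  set (G := fun x => kernel_approx_prim k n x + M * log_moment (S k) n (uprod x)).
  assert (H2 : is_RInt (fun x => kernel_approx k n x + M * moment_term (S k) n x) c (1/2)
                 (G (1/2) - G c)).
  { apply is_RInt_derive_R; intros x hx; rewrite Rmin_left, Rmax_right in hx by lra.
    - apply (is_derive_plus (kernel_approx_prim k n) (fun t => M * log_moment (S k) n (uprod t))).
      + apply kernel_approx_prim_derive; lra.
      + apply is_derive_scal, log_moment_uprod_derive; lra.
    - apply (continuous_plus (kernel_approx k n) (fun t => M * moment_term (S k) n t)).
      + apply kernel_approx_continuous; lra.
      + apply (continuous_scal_r M (moment_term (S k) n)), moment_term_continuous; lra. }
  split.
  - rewrite <- (is_RInt_unique _ _ _ _ H1). apply RInt_le; [lra|eexists; exact H1|exact Hex|].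
    intros x hx. generalize (log_kernel_sub_approx_bounds n k x ltac:(lra)). lra.
  - eapply Rle_trans.
    + apply (RInt_le _ (fun x => kernel_approx k n x + M * moment_term (S k) n x));
        [lra|exact Hex|eexists; exact H2|].
      intros x hx. generalize (log_kernel_sub_approx_bounds n k x ltac:(lra)). unfold M. lra.
    + rewrite (is_RInt_unique _ _ _ _ H2). unfold G. lra.
Qed.

Lemma kernel_int_antitone n c1 c2 : 0 < c1 <= c2 -> c2 <= 1/2 -> kernel_int n c2 <= kernel_int n c1.
Proof.
  intros h1 h2. unfold kernel_int.
  rewrite <- (RInt_Chasles (log_kernel n) c1 c2 (1/2));
    [|apply ex_RInt_log_kernel; lra|apply ex_RInt_log_kernel; lra].
  change (plus ?a ?b) with (a + b).
  assert (0 <= RInt (log_kernel n) c1 c2); [|lra].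
  apply RInt_ge_0; [lra|apply ex_RInt_log_kernel; lra|].
  intros x hx. apply log_kernel_nonneg; lra.
Qed.

(** * Existence of the improper integral *)

Lemma RInt_inner_int_fold n c : 0 < c <= 1/2 ->
  RInt (inner_int n) c (1 - c) = kernel_int n c + fold_corr n (1/2) - fold_corr n c.
Proof.
  intros hc.
  assert (Hg : is_RInt (inner_int n) c (1/2) (RInt (inner_int n) c (1/2)))
    by (apply (RInt_correct (V := R_CompleteNormedModule)), ex_RInt_inner_int; lra).
  assert (Hg' : is_RInt (fun y => inner_int n (1 - y)) c (1/2) (RInt (inner_int n) (1/2) (1 - c))).
  { rewrite <- RInt_inner_int_reflect by lra.
    apply (RInt_correct (V := R_CompleteNormedModule)), ex_RInt_continuous_R.
    intros z hz. rewrite Rmin_left, Rmax_right in hz by lra.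
    apply inner_int_reflect_continuous; lra. }
  assert (HK : is_RInt (log_kernel n) c (1/2) (kernel_int n c))
    by (apply (RInt_correct (V := R_CompleteNormedModule)), ex_RInt_log_kernel; lra).
  assert (HW : is_RInt (fun x => inner_int n x + inner_int n (1 - x) - log_kernel n x) c (1/2)
                 (fold_corr n (1/2) - fold_corr n c)).
  { apply is_RInt_derive_R; intros x hx; rewrite Rmin_left, Rmax_right in hx by lra.
    - apply fold_corr_derive; lra.
    - apply (continuous_minus (fun y => inner_int n y + inner_int n (1 - y)) (log_kernel n));
        [apply (continuous_plus (inner_int n) (fun y => inner_int n (1 - y)))|];
        [apply inner_int_continuous|apply inner_int_reflect_continuous|apply log_kernel_continuous];
        lra. }
  assert (H1 := is_RInt_plus _ _ _ _ _ _ Hg Hg').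
  assert (H2 := is_RInt_plus _ _ _ _ _ _ HK HW).
  apply (is_RInt_ext _ (fun x => plus (inner_int n x) (inner_int n (1 - x)))) in H2;
    [|intros x _; change (plus ?a ?b) with (a + b); req; ring].
  rewrite <- RInt_inner_int_Chasles with (b := 1/2) by lra.
  apply (is_RInt_unique (V := R_CompleteNormedModule)) in H1, H2. change (plus ?a ?b) with (a + b) in H1, H2.
  rewrite <- H1, H2. req. ring.
Qed.

Lemma fold_corr_small n eps : 0 < eps ->
  exists d, 0 < d <= 1/2 /\ forall c, 0 < c < d -> Rabs (fold_corr n c) < eps.
Proof.
  intros he.
  destruct (mul_opp_ln_pow_small 1 (S n) (eps / 8) ltac:(lra) ltac:(lra)) as [d [hd Hd]].
  exists (Rmin d (1/2)). split; [split; [apply Rmin_glb_lt|apply Rmin_r]; lra|].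
  intros c [hc0 hc1]. assert (hcd : c < d) by (eapply Rlt_le_trans; [apply hc1|apply Rmin_l]).
  assert (hc2 : c <= 1/2) by (eapply Rlt_le, Rlt_le_trans; [apply hc1|apply Rmin_r]).
  assert (hW := fold_corr_abs_le n c ltac:(lra)).
  assert (hB := opp_ln_1_minus_le c ltac:(lra)).
  assert (hc := Hd c ltac:(lra)).
  assert (0 <= (1 + - ln c) ^ S n) by (apply pow_le; generalize (opp_ln_nonneg c ltac:(lra)); lra).
  nra.
Qed.

Definition kernel_int_range (n : nat) (y : R) : Prop := exists c, 0 < c <= 1/2 /\ y = kernel_int n c.

Definition coef_sum (k : nat) : R := sum_f_R0 series_coef k.

Lemma coef_sum_pos k : 0 < coef_sum k.
Proof.
  unfold coef_sum. induction k; simpl; [apply series_coef_pos|].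
  generalize (series_coef_pos (S k)). lra.
Qed.

Lemma kernel_approx_prim_small k n eps : 0 < eps ->
  exists c, 0 < c <= 1/2 /\ kernel_approx_prim k n c < eps.
Proof.
  intros he.
  set (A := coef_sum k * INR (fact (S n))).
  assert (hA : 0 < A) by (apply Rmult_lt_0_compat; [apply coef_sum_pos|apply INR_fact_lt_0]).
  destruct (mul_opp_ln_pow_small 1 n (eps / A) ltac:(lra) ltac:(apply Rdiv_lt_0_compat; lra))
    as [d [hd Hd]].
  set (c := Rmin d (1/2) / 2).
  assert (hc0 : 0 < Rmin d (1/2)) by (apply Rmin_glb_lt; lra).
  assert (hc1 : c <= 1/2) by (unfold c; generalize (Rmin_r d (1/2)); lra).
  assert (hc2 : c < d) by (unfold c; generalize (Rmin_l d (1/2)); lra).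
  assert (hcp : 0 < c) by (unfold c; lra).
  exists c. split; [lra|].
  assert (hu := uprod_le_1 c ltac:(lra)).
  assert (huc : uprod c <= c) by (unfold uprod; nra).
  assert (hsmall := Hd (uprod c) ltac:(lra)).
  apply Rle_lt_trans with (A * (uprod c * (1 + - ln (uprod c)) ^ n)).
  - unfold kernel_approx_prim, A, coef_sum. rewrite Rmult_assoc, (Rmult_comm (sum_f_R0 _ k)), scal_sum.
    apply sum_Rle. intros i _.
    apply Rmult_le_compat_l; [apply Rlt_le, series_coef_pos|apply log_moment_le; lra].
  - apply (Rmult_lt_compat_l A) in hsmall; [|lra].
    replace (A * (eps / A)) with eps in hsmall by (field; lra). exact hsmall.
Qed.

Lemma kernel_int_le n k c : 0 < c <= 1/2 ->
  kernel_int n c <= kernel_approx_prim k n (1/2) + 4 * rem_const k * log_moment (S k) n (uprod (1/2)).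
Proof.
  intros hc. assert (h := kernel_int_bounds n k c hc).
  assert (0 <= kernel_approx_prim k n c) by (apply kernel_approx_prim_nonneg; lra).
  assert (0 <= log_moment (S k) n (uprod c)) by (apply log_moment_nonneg, uprod_le_1; lra).
  assert (0 < rem_const k) by apply rem_const_pos.
  nra.
Qed.

Lemma kernel_int_has_lub n : exists L, is_lub (kernel_int_range n) L.
Proof.
  destruct (completeness (kernel_int_range n)) as [L HL].
  - exists (kernel_approx_prim 0 n (1/2) + 4 * rem_const 0 * log_moment 1 n (uprod (1/2))).
    intros y [c [hc ->]]. apply kernel_int_le, hc.
  - exists (kernel_int n (1/2)), (1/2). split; [lra|reflexivity].
  - exists L; exact HL.
Qed.

Lemma kernel_int_lub_bounds n k L : is_lub (kernel_int_range n) L ->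
  kernel_approx_prim k n (1/2) <= L
  <= kernel_approx_prim k n (1/2) + 4 * rem_const k * log_moment (S k) n (uprod (1/2)).
Proof.
  intros [HL1 HL2]. split.
  - apply Rnot_lt_le. intros hlt.
    destruct (kernel_approx_prim_small k n (kernel_approx_prim k n (1/2) - L) ltac:(lra))
      as [c [hc hR]].
    assert (h := kernel_int_bounds n k c hc).
    assert (kernel_int n c <= L) by (apply HL1; exists c; auto). lra.
  - apply HL2. intros y [c [hc ->]]. apply kernel_int_le, hc.
Qed.

Lemma kernel_int_near_lub n L eps : is_lub (kernel_int_range n) L -> 0 < eps ->
  exists c0, 0 < c0 <= 1/2 /\ forall c, 0 < c <= c0 -> L - eps < kernel_int n c <= L.
Proof.
  intros [HL1 HL2] he.
  assert (Hc0 : exists c0, 0 < c0 <= 1/2 /\ L - eps < kernel_int n c0).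
  { apply NNPP. intros Hn.
    assert (L <= L - eps); [|lra].
    apply HL2. intros y [c [hc ->]]. apply Rnot_lt_le. intros hlt. apply Hn. exists c. auto. }
  destruct Hc0 as [c0 [hc0 hF]]. exists c0. split; [exact hc0|].
  intros c hc. split.
  - generalize (kernel_int_antitone n c c0 ltac:(lra) ltac:(lra)). lra.
  - apply HL1. exists c. split; [lra|reflexivity].
Qed.

Lemma RInt_inner_int_sym_lim n L eps : is_lub (kernel_int_range n) L -> 0 < eps ->
  exists d, 0 < d <= 1/2 /\ forall c, 0 < c < d ->
    Rabs (RInt (inner_int n) c (1 - c) - (L + fold_corr n (1/2))) < eps.
Proof.
  intros HL he.
  destruct (kernel_int_near_lub n L (eps / 2) HL ltac:(lra)) as [c0 [hc0 Hc0]].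
  destruct (fold_corr_small n (eps / 2) ltac:(lra)) as [d1 [hd1 Hd1]].
  exists (Rmin c0 d1). split; [split; [apply Rmin_glb_lt|eapply Rle_trans; [apply Rmin_l|]]; lra|].
  intros c [hc1 hc2].
  assert (hcc0 : c <= c0) by (eapply Rlt_le, Rlt_le_trans; [apply hc2|apply Rmin_l]).
  assert (hcd1 : c < d1) by (eapply Rlt_le_trans; [apply hc2|apply Rmin_r]).
  rewrite RInt_inner_int_fold by lra.
  assert (hK := Hc0 c ltac:(lra)). assert (hW := Rabs_def2 _ _ (Hd1 c ltac:(lra))).
  apply Rabs_def1; lra.
Qed.

Lemma RInt_inner_int_le_wider n a b a' b' : 0 < a' <= a -> a <= b -> b <= b' -> b' < 1 ->
  RInt (inner_int n) a b <= RInt (inner_int n) a' b'.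
Proof.
  intros h1 h2 h3 h4.
  rewrite <- (RInt_inner_int_Chasles n a' a b') by lra.
  rewrite <- (RInt_inner_int_Chasles n a b b') by lra.
  generalize (RInt_inner_int_nonneg n a' a ltac:(lra) ltac:(lra))
             (RInt_inner_int_nonneg n b b' ltac:(lra) ltac:(lra)). lra.
Qed.

Lemma RInt_inner_int_lim n L eps : is_lub (kernel_int_range n) L -> 0 < eps ->
  exists d, 0 < d <= 1/2 /\ forall a b, 0 < a < d -> 1 - d < b < 1 ->
    Rabs (RInt (inner_int n) a b - (L + fold_corr n (1/2))) < eps.
Proof.
  intros HL he. destruct (RInt_inner_int_sym_lim n L eps HL he) as [d [hd Hd]].
  exists d. split; [exact hd|]. intros a b ha hb.
  set (m := Rmin a (1 - b)). set (M := Rmax a (1 - b)).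
  assert (hm : 0 < m <= a /\ m <= 1 - b) by (unfold m; split; [split; [apply Rmin_glb_lt|apply Rmin_l]|apply Rmin_r]; lra).
  assert (hM : a <= M /\ 1 - b <= M < d) by (unfold M; split; [apply Rmax_l|split; [apply Rmax_r|apply Rmax_lub_lt]]; lra).
  assert (hlo := RInt_inner_int_le_wider n M (1 - M) a b ltac:(lra) ltac:(lra) ltac:(lra) ltac:(lra)).
  assert (hhi := RInt_inner_int_le_wider n a b m (1 - m) ltac:(lra) ltac:(lra) ltac:(lra) ltac:(lra)).
  assert (h1 := Rabs_def2 _ _ (Hd M ltac:(lra))). assert (h2 := Rabs_def2 _ _ (Hd m ltac:(lra))).
  apply Rabs_def1; lra.
Qed.

Lemma is_I_lub n L : is_lub (kernel_int_range n) L -> is_I n (L + fold_corr n (1/2)).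
Proof.
  intros HL. exists (inner_int n). split; [intros x hx; apply inner_int_is_RInt, hx|].
  intros eps he. destruct (RInt_inner_int_lim n L eps HL he) as [d [hd Hd]].
  exists d. split; [lra|]. intros a b ha hb.
  exists (ex_RInt_Reals_0 _ _ _ (ex_RInt_inner_int n a b ltac:(lra) ltac:(lra) ltac:(lra))).
  rewrite <- RInt_Reals. apply Hd; auto.
Qed.

Lemma is_improper_int01_unique g h v w : (forall x, 0 < x < 1 -> g x = h x) ->
  is_improper_int01 g v -> is_improper_int01 h w -> v = w.
Proof.
  intros Hgh Hg Hh. apply Rminus_diag_uniq, Rabs_eq_0, Rle_antisym; [|apply Rabs_pos].
  apply Rnot_lt_le. intros hpos. set (eps := Rabs (v - w) / 2).
  destruct (Hg eps ltac:(unfold eps; lra)) as [d1 [hd1 H1]].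
  destruct (Hh eps ltac:(unfold eps; lra)) as [d2 [hd2 H2]].
  set (a := Rmin (Rmin d1 d2) (1/2) / 2).
  assert (0 < Rmin (Rmin d1 d2) (1/2)) by (repeat apply Rmin_glb_lt; lra).
  assert (Rmin (Rmin d1 d2) (1/2) <= d1 /\ Rmin (Rmin d1 d2) (1/2) <= d2 /\ Rmin (Rmin d1 d2) (1/2) <= 1/2)
    by (generalize (Rmin_l (Rmin d1 d2) (1/2)) (Rmin_r (Rmin d1 d2) (1/2)) (Rmin_l d1 d2) (Rmin_r d1 d2); lra).
  destruct (H1 a (1 - a) ltac:(unfold a; lra) ltac:(unfold a; lra)) as [pr1 h1].
  destruct (H2 a (1 - a) ltac:(unfold a; lra) ltac:(unfold a; lra)) as [pr2 h2].
  rewrite (RiemannInt_P18 pr1 pr2) in h1 by (unfold a in *; try lra; intros x hx; apply Hgh; lra).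
  assert (Rabs (v - w) <= Rabs (RiemannInt pr2 - v) + Rabs (RiemannInt pr2 - w)).
  { replace (v - w) with (- (RiemannInt pr2 - v) + (RiemannInt pr2 - w)) by ring.
    eapply Rle_trans; [apply Rabs_triang|]. rewrite Rabs_Ropp. lra. }
  unfold eps in *. lra.
Qed.

Lemma is_I_lub_unique n L v : is_lub (kernel_int_range n) L -> is_I n v ->
  v = L + fold_corr n (1/2).
Proof.
  intros HL [g [Hg Himp]]. destruct (is_I_lub n L HL) as [g' [Hg' Himp']].
  apply (is_improper_int01_unique g g' v _); [|exact Himp|exact Himp'].
  intros x hx. destruct (Hg x hx) as [pr1 e1]. destruct (Hg' x hx) as [pr2 e2].
  rewrite <- e1, <- e2. apply RiemannInt_P5.
Qed.

(** * Asymptotic expansion *)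

Lemma fact_mul_partial_sum n k :
  INR (fact n) * partial_sum (S k) n = sum_f_R0 (fun i => series_coef i * log_moment i n 1) k.
Proof.
  unfold partial_sum. replace (S k - 1)%nat with k by lia.
  rewrite scal_sum. apply sum_eq. intros i _. rewrite log_moment_one. unfold series_coef, cbin.
  rewrite Nat.add_1_r. replace (n + 2)%nat with (S (S n)) by lia.
  assert (h := INR_S_pos i). rewrite <- (tech_pow_Rmult _ (S n)). field.
  split; [apply pow_nonzero|]; lra.
Qed.

Lemma partial_sum_1 n : partial_sum 1 n = 2.
Proof.
  unfold partial_sum. simpl sum_f_R0.
  change (Binomial.C 2 1) with (cbin 1). rewrite cbin_1, pow1. field.
Qed.

Lemma fold_corr_half_le n : Rabs (fold_corr n (1/2)) <= 8 * 3 ^ n.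
Proof.
  eapply Rle_trans; [apply fold_corr_abs_le; lra|].
  replace (1 - 1/2) with (1/2) by field.
  assert (h := opp_ln_half_le_1).
  assert (hp : 0 <= (1 + - ln (1/2)) ^ S n <= 2 ^ S n) by (split; [apply pow_le|apply pow_incr]; lra).
  assert (h23 : 2 ^ n <= 3 ^ n) by (apply pow_incr; lra).
  assert (- ln (1/2) * (1 + - ln (1/2)) ^ S n <= (1 + - ln (1/2)) ^ S n)
    by (rewrite <- (Rmult_1_l ((1 + _) ^ S n)) at 2; apply Rmult_le_compat_r; lra).
  assert (2 ^ S n = 2 * 2 ^ n) by reflexivity. lra.
Qed.

Lemma kernel_int_lub_expansion n k L : is_lub (kernel_int_range n) L ->
  Rabs (L + fold_corr n (1/2) - INR (fact n) * partial_sum (S k) n)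
  <= 4 * rem_const k * (INR (fact n) / INR (S (S k)) ^ S n) + (8 + coef_sum k) * 3 ^ n.
Proof.
  intros HL. rewrite fact_mul_partial_sum.
  assert (hu : uprod (1/2) = 1/4) by (unfold uprod; field).
  assert (hLb := kernel_int_lub_bounds n k L HL). rewrite hu in hLb.
  replace (kernel_approx_prim k n (1/2)) with (sum_f_R0 (fun i => series_coef i * log_moment i n (1/4)) k)
    in hLb by (unfold kernel_approx_prim; rewrite hu; reflexivity).
  set (X := sum_f_R0 (fun i => series_coef i * log_moment i n 1) k) in *.
  set (R0 := sum_f_R0 (fun i => series_coef i * log_moment i n (1/4)) k) in *.
  assert (hXR : 0 <= X - R0 <= coef_sum k * 3 ^ n).
  { unfold X, R0, coef_sum. rewrite <- minus_sum, (Rmult_comm (sum_f_R0 _ k)), scal_sum.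
    split; [apply cond_pos_sum|apply sum_Rle]; intros i; [|intros _];
      rewrite <- Rmult_minus_distr_l;
      generalize (series_coef_pos i) (log_moment_increment_le i n); nra. }
  assert (hQ := log_moment_increment_le (S k) n). rewrite log_moment_one in hQ.
  assert (hM := rem_const_pos k).
  assert (hQ2 : 4 * rem_const k * log_moment (S k) n (1/4)
                <= 4 * rem_const k * (INR (fact n) / INR (S (S k)) ^ S n))
    by (apply Rmult_le_compat_l; lra).
  assert (hW := proj1 (Rabs_le_between _ _) (fold_corr_half_le n)).
  apply Rabs_le. lra.
Qed.

Lemma pow_div_fact_eventually_le x y : 0 <= x -> 0 < y ->
  exists N, forall n, (N <= n)%nat -> x ^ n / INR (fact n) <= / y ^ n.
Proof.
  intros hx hy. destruct (cv_speed_pow_fact (x * y) 1 ltac:(lra)) as [N HN].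
  exists N. intros n hn. specialize (HN n ltac:(lia)).
  assert (hf := INR_fact_lt_0 n). assert (hyn : 0 < y ^ n) by (apply pow_lt; lra).
  unfold R_dist in HN. rewrite Rminus_0_r, Rpow_mult_distr, Rabs_right in HN
    by (apply Rle_ge, Rdiv_le_0_compat; [apply Rmult_le_pos; apply pow_le|]; lra).
  apply (Rmult_le_reg_r (y ^ n)); [lra|]. rewrite Rinv_l by lra.
  replace (x ^ n / INR (fact n) * y ^ n) with (x ^ n * y ^ n / INR (fact n)) by (field; lra).
  lra.
Qed.

Lemma is_I_exists n : exists v, is_I n v.
Proof.
  destruct (kernel_int_has_lub n) as [L HL]. exists (L + fold_corr n (1/2)). apply is_I_lub, HL.
Qed.

Lemma is_I_expansion k : exists Cst N, forall n v, (N <= n)%nat -> is_I n v ->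
  Rabs (v / INR (fact n) - partial_sum (S k) n) <= Cst * / INR (S (S k)) ^ n.
Proof.
  set (q := INR (S (S k))). assert (hq : 1 <= q) by (apply INR_ge_1; lia).
  set (M := 4 * rem_const k). set (C := 8 + coef_sum k).
  assert (hM : 0 < M) by (generalize (rem_const_pos k); unfold M; lra).
  assert (hC : 0 < C) by (generalize (coef_sum_pos k); unfold C; lra).
  destruct (pow_div_fact_eventually_le 3 q ltac:(lra) ltac:(lra)) as [N HN].
  exists (M + C), N. intros n v hn Hv.
  destruct (kernel_int_has_lub n) as [L HL].
  assert (hE := kernel_int_lub_expansion n k L HL). rewrite <- (is_I_lub_unique n L v HL Hv) in hE.
  fold q M C in hE.
  assert (hf := INR_fact_lt_0 n). assert (hqn : 0 < q ^ n) by (apply pow_lt; lra).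
  replace (v / INR (fact n) - partial_sum (S k) n)
    with ((v - INR (fact n) * partial_sum (S k) n) / INR (fact n)) by (field; lra).
  rewrite Rabs_div, (Rabs_right (INR (fact n))) by lra.
  apply Rle_div_l; [lra|].
  assert (hMq : M * (INR (fact n) / q ^ S n) <= M * / q ^ n * INR (fact n)).
  { replace (M * / q ^ n * INR (fact n)) with (M * (INR (fact n) / q ^ n)) by (field; lra).
    apply Rmult_le_compat_l; [lra|]. apply Rmult_le_compat_l; [lra|].
    apply Rinv_le_contravar; [lra|]. rewrite <- tech_pow_Rmult. nra. }
  assert (hCq : C * 3 ^ n <= C * / q ^ n * INR (fact n)).
  { assert (H := HN n hn). apply (Rmult_le_compat_r (INR (fact n))) in H; [|lra].
    replace (3 ^ n / INR (fact n) * INR (fact n)) with (3 ^ n) in H by (field; lra).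
    rewrite Rmult_assoc. apply Rmult_le_compat_l; lra. }
  lra.
Qed.

Lemma is_I_over_fact_cv I : (forall n, is_I n (I n)) ->
  Un_cv (fun n => I n / (2 * INR (fact n))) 1.
Proof.
  intros HI eps he.
  destruct (is_I_expansion 0) as [Cst [N1 HN1]].
  set (C := Rmax Cst 1). assert (hC : 0 < C) by (unfold C; generalize (Rmax_r Cst 1); lra).
  destruct (pow_lt_1_zero (/ 2) ltac:(rewrite Rabs_right; lra) (2 * eps / C)
              ltac:(apply Rdiv_lt_0_compat; lra)) as [N2 HN2].
  exists (Nat.max N1 N2). intros n hn.
  assert (hb := HN1 n (I n) ltac:(lia) (HI n)). rewrite partial_sum_1 in hb.
  assert (hp := HN2 n ltac:(lia)). rewrite Rabs_right in hp by (apply Rle_ge, pow_le; lra).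
  replace (INR (S (S 0))) with 2 in hb by (simpl; ring). rewrite <- pow_inv in hb.
  assert (hp0 : 0 <= (/ 2) ^ n) by (apply pow_le; lra).
  assert (hCst : Cst * (/ 2) ^ n <= C * (/ 2) ^ n) by (apply Rmult_le_compat_r; [lra|apply Rmax_l]).
  assert (C * (/ 2) ^ n < 2 * eps).
  { apply (Rmult_lt_compat_l C) in hp; [|lra]. replace (C * (2 * eps / C)) with (2 * eps) in hp by (field; lra). lra. }
  assert (hf := INR_fact_lt_0 n). unfold R_dist.
  replace (I n / (2 * INR (fact n)) - 1) with ((I n / INR (fact n) - 2) / 2) by (field; lra).
  rewrite Rabs_div, (Rabs_right 2) by lra. apply Rlt_div_l; lra.
Qed.

Theorem theorem3 :
  (forall n : nat, exists v : R, is_I n v) /\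
  (forall I : nat -> R, (forall n, is_I n (I n)) ->
     Un_cv (fun n => I n / (2 * INR (fact n))) 1 /\
     (forall K : nat, (1 <= K)%nat ->
        exists Cst : R, exists N : nat, forall n : nat, (N <= n)%nat ->
          Rabs (I n / INR (fact n) - partial_sum K n) <= Cst * / (INR (K + 1)) ^ n)).
Proof.
  split; [exact is_I_exists|]. intros I HI. split; [exact (is_I_over_fact_cv I HI)|].
  intros [|k] hK; [lia|].
  destruct (is_I_expansion k) as [Cst [N HN]]. exists Cst, N. intros n hn.
  replace (S k + 1)%nat with (S (S k)) by lia. exact (HN n (I n) hn (HI n)).
Qed.
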